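(* Let $p$ be a prime, $k$ an algebraically closed field of characteristic $p$, $a\in\mathbb N$ and $n\in\mathbb N$. Then the monomial $X^a$ lies in $\Sigma_n$ if and only if $S_p(a)\le n$. Consequently $\min\{n\in\mathbb N:X^a\in\Sigma_n\}=S_p(a)$.
   Context: An additive polynomial in $k[X]$ is a $k$-linear combination of the monomials $X^{p^j}$, $j\ge0$. For $t\ge1$, $\Sigma_t$ is the $k$-subspace of $k[X]$ spanned by $1$ and all products of at most $t$ additive polynomials; $\Sigma_0=k$. For $a\in\mathbb N$ with base-$p$ expansion $a=\sum_{i=0}^t a_ip^i$ ($0\le a_i\le p-1$), $S_p(a)=\sum_i a_i$ is the sum of its base-$p$ digits. *)

From HB Require Import structures.
From mathcomp Require Import all_boot all_order all_algebra all_field.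
Set Implicit Arguments. Unset Strict Implicit. Unset Printing Implicit Defensive.
Import GRing.Theory.
Local Open Scope ring_scope.

Definition additive_poly (k : fieldType) (p : nat) (f : {poly k}) : Prop :=
  exists c : seq k, f = \sum_(j < size c) c`_j *: 'X^(p ^ j).

(* Sigma_n: the k-span of all products of at most n additive polynomials
   (the empty product is 1, so this contains 1; for n = 0 it is k). *)
Definition in_Sigma (k : fieldType) (p n : nat) (q : {poly k}) : Prop :=
  exists s : seq (k * seq {poly k}),
    (forall x, x \in s -> (size x.2 <= n)%N /\ forall f, f \in x.2 -> additive_poly p f)
    /\ q = \sum_(x <- s) x.1 *: \prod_(f <- x.2) f.

(* Sum of base-p digits of a (valid for p >= 2: digit i is a %/ p^i %% p,
   and digits of index >= a are 0 since p^a > a). *)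
Definition digit_sum (p a : nat) : nat :=
  (\sum_(i < a.+1) (a %/ p ^ i %% p))%N.

From HB Require Import structures.
From mathcomp Require Import all_boot all_order all_algebra all_field zify.

(* Sufficiency: a is a sum of S_p(a) powers of p (one p^i for each unit of
   the digit a_i), so X^a is the product of S_p(a) additive monomials
   X^(p^i) and thus lies in Sigma_n for every n >= S_p(a).

   Necessity: call a polynomial t-digit-bounded when every exponent b in
   its support has S_p(b) <= t.  Since S_p is subadditive (adding p^j raises
   the digit sum by at most one, carries only lower it), t-bounded times
   u-bounded is (t+u)-bounded; additive polynomials are 1-bounded, so
   products of at most n of them, and their linear combinations, are
   n-bounded.  Hence X^a in Sigma_n forces S_p(a) <= n. *)

Set Implicit Arguments.
Unset Strict Implicit.
Unset Printing Implicit Defensive.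

Section DigitSum.
Variable p : nat.
Hypothesis p_gt1 : (1 < p)%N.

Let p_gt0 : (0 < p)%N. Proof. exact: ltnW. Qed.

Lemma digit_sum_widen N m : (m < N)%N ->
  (\sum_(i < N) (m %/ p ^ i %% p))%N = digit_sum p m.
Proof.
move=> lt_mN; rewrite /digit_sum -!(big_mkord xpredT (fun i => m %/ p ^ i %% p)).
rewrite (@big_cat_nat _ _ _ m.+1 0 N _ _ (leq0n _) lt_mN) /= [X in (_ + X)%N]big1_seq ?addn0 //.
move=> i /andP[_]; rewrite mem_index_iota => /andP[le_mi _].
rewrite divn_small ?mod0n //; apply: leq_trans (ltn_expl m p_gt1) _.
by rewrite leq_exp2l // ltnW.
Qed.

Lemma digit_sum0 : digit_sum p 0 = 0%N.
Proof. by rewrite /digit_sum big_ord_recl big_ord0 div0n mod0n. Qed.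

Lemma digit_sum_rec a : digit_sum p a = (a %% p + digit_sum p (a %/ p))%N.
Proof.
case: a => [|a]; first by rewrite div0n mod0n digit_sum0.
rewrite {1}/digit_sum big_ord_recl expn0 divn1; congr (_ + _)%N.
rewrite -(@digit_sum_widen a.+1 (a.+1 %/ p)); last exact: ltn_Pdiv.
by apply: eq_bigr => i _; rewrite /bump /= expnS divnMA.
Qed.

Lemma digit_sum_expn j : digit_sum p (p ^ j) = 1%N.
Proof.
elim: j => [|j IHj]; first by rewrite digit_sum_rec modn_small // divn_small // digit_sum0.
by rewrite digit_sum_rec expnS modnMr mulKn.
Qed.

(* Adding one raises the digit sum by at most one: a carry turns the last
   digit p - 1 into 0 and passes the increment on to a / p. *)
Lemma digit_sum_succ x : (digit_sum p x.+1 <= (digit_sum p x).+1)%N.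
Proof.
elim/ltn_ind: x => x IHx; rewrite (digit_sum_rec x) (digit_sum_rec x.+1).
rewrite modnS divnS //; case: ifP => [dvd_p_x1 | _]; last by rewrite add0n.
have x_gt0 : (0 < x)%N by case: x {IHx} dvd_p_x1 => //; rewrite dvdn1 => /eqP p1; lia.
rewrite add0n add1n; apply: leq_trans (IHx _ (ltn_Pdiv p_gt1 x_gt0)) _; lia.
Qed.

Lemma digit_sum_add_expn x j : (digit_sum p (x + p ^ j) <= (digit_sum p x).+1)%N.
Proof.
elim: j x => [|j IHj] x; first by rewrite expn0 addn1 digit_sum_succ.
rewrite digit_sum_rec (digit_sum_rec x) expnS mulnC divnDMl //.
have -> : (x + p ^ j * p) %% p = x %% p by rewrite addnC modnMDl.
by rewrite -addnS leq_add2l.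
Qed.

Lemma digit_sum_add_powers x (L : seq nat) :
  (digit_sum p (x + \sum_(j <- L) p ^ j) <= digit_sum p x + size L)%N.
Proof.
elim: L => [|j L IHL]; first by rewrite big_nil !addn0.
rewrite big_cons addnCA addnC addnS /=; exact: leq_trans (digit_sum_add_expn _ _) _.
Qed.

Lemma digit_sum_powers a : exists L : seq nat,
  size L = digit_sum p a /\ a = (\sum_(j <- L) p ^ j)%N.
Proof.
elim/ltn_ind: a => a IHa; have [-> | a_gt0] := posnP a.
  by exists [::]; rewrite digit_sum0 big_nil.
have [L [size_L def_a]] := IHa _ (ltn_Pdiv p_gt1 a_gt0).
exists (nseq (a %% p) 0%N ++ map succn L); split.
  by rewrite size_cat size_nseq size_map size_L -digit_sum_rec.
rewrite big_cat big_nseq big_map.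
under eq_bigr do rewrite expnS.
by rewrite -big_distrr /= -def_a expn0 iter_addn_0 mul1n addnC mulnC -divn_eq.
Qed.

Lemma digit_sum_addn x y : (digit_sum p (x + y) <= digit_sum p x + digit_sum p y)%N.
Proof.
have [L [<- ->]] := digit_sum_powers y; exact: digit_sum_add_powers.
Qed.
End DigitSum.

Import GRing.Theory.
Local Open Scope ring_scope.

Section DigitBounded.
Variables (R : nzRingType) (p : nat).
Hypothesis p_gt1 : (1 < p)%N.

Definition digit_bounded (t : nat) (q : {poly R}) : Prop :=
  forall b, q`_b != 0 -> (digit_sum p b <= t)%N.

Lemma digit_bounded_le t u q : (t <= u)%N -> digit_bounded t q -> digit_bounded u q.
Proof. by move=> le_tu q_t b /q_t /leq_trans; apply. Qed.

Lemma digit_bounded0 t : digit_bounded t 0.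
Proof. by move=> b; rewrite coef0 eqxx. Qed.

Lemma digit_boundedD t q1 q2 :
  digit_bounded t q1 -> digit_bounded t q2 -> digit_bounded t (q1 + q2).
Proof.
move=> q1_t q2_t b; rewrite coefD.
by have [->|/q1_t //] := eqVneq q1`_b 0; rewrite add0r => /q2_t.
Qed.

Lemma digit_boundedZ t c q : digit_bounded t q -> digit_bounded t (c *: q).
Proof.
move=> q_t b; rewrite coefZ; apply: contraR => /negP b_big.
by have [->|/q_t //] := eqVneq q`_b 0; rewrite mulr0.
Qed.

Lemma digit_boundedM t u q1 q2 :
  digit_bounded t q1 -> digit_bounded u q2 -> digit_bounded (t + u) (q1 * q2).
Proof.
move=> q1_t q2_u b; rewrite coefM; apply: contraR => b_big; rewrite big1 // => i _.
have [->|/q1_t le_i] := eqVneq q1`_i 0; first by rewrite mul0r.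
have [->|/q2_u le_bi] := eqVneq q2`_(b - i) 0; first by rewrite mulr0.
case/negP: b_big; rewrite -(subnKC (ltnSE (ltn_ord i))).
exact: leq_trans (digit_sum_addn p_gt1 i (b - i)) (leq_add le_i le_bi).
Qed.

Lemma digit_bounded_prod (t : nat) (fs : seq {poly R}) :
  (forall f, f \in fs -> digit_bounded t f) ->
  digit_bounded (t * size fs) (\prod_(f <- fs) f).
Proof.
elim: fs => [|f fs IHfs] fs_t.
  by rewrite big_nil muln0 => -[|b]; rewrite coef1 ?digit_sum0 //= eqxx.
rewrite big_cons /= mulnS; apply: digit_boundedM; first by apply: fs_t; rewrite mem_head.
by apply: IHfs => g fs_g; apply: fs_t; rewrite inE fs_g orbT.
Qed.

End DigitBounded.

Section SigmaMonomials.
Variables (k : fieldType) (p : nat).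
Hypothesis p_gt1 : (1 < p)%N.

Lemma digit_bounded_Xexpn j : digit_bounded p 1 ('X^(p ^ j) : {poly k}).
Proof.
move=> b; rewrite coefXn.
have [->|_] := eqVneq b (p ^ j)%N; last by rewrite eqxx.
by rewrite digit_sum_expn.
Qed.

Lemma additive_poly_digit_bounded (f : {poly k}) :
  additive_poly p f -> digit_bounded p 1 f.
Proof.
case=> c ->; apply: big_ind => [|q1 q2|j _]; first exact: digit_bounded0.
  exact: digit_boundedD.
exact/digit_boundedZ/digit_bounded_Xexpn.
Qed.

Lemma Sigma_digit_bounded n (q : {poly k}) : in_Sigma p n q -> digit_bounded p n q.
Proof.
case=> s [s_ok ->]; rewrite big_seq; apply: big_ind => [|q1 q2|x /s_ok [size_x x_add]].
- exact: digit_bounded0.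
- exact: digit_boundedD.
apply/digit_boundedZ/(digit_bounded_le size_x); rewrite -[size _]mul1n.
apply: (digit_bounded_prod p_gt1) => f /x_add.
exact: additive_poly_digit_bounded.
Qed.

Lemma additive_poly_Xexpn j : additive_poly p ('X^(p ^ j) : {poly k}).
Proof.
exists (rcons (nseq j 0) 1); rewrite size_rcons size_nseq big_ord_recr /=.
rewrite nth_rcons size_nseq ltnn eqxx scale1r big1 ?add0r // => i _.
by rewrite nth_rcons size_nseq ltn_ord nth_nseq ltn_ord scale0r.
Qed.

Lemma in_Sigma_Xn n a : (digit_sum p a <= n)%N -> in_Sigma p n ('X^a : {poly k}).
Proof.
move=> le_an; have [L [size_L def_a]] := digit_sum_powers p_gt1 a.
exists [:: (1, [seq 'X^(p ^ j) | j <- L])]; split.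
  move=> x; rewrite inE => /eqP -> /=; rewrite size_map size_L; split=> //.
  by move=> f /mapP [j _ ->]; apply: additive_poly_Xexpn.
rewrite big_seq1 scale1r big_map def_a.
by elim: L {size_L def_a} => [|j L IHL]; rewrite ?big_nil // !big_cons exprD IHL.
Qed.

End SigmaMonomials.

Theorem lemma3p5 (p : nat) (k : closedFieldType) (hp : prime p)
    (hchar : p \in [pchar k]) (a : nat) :
  (forall n : nat, in_Sigma p n ('X^a : {poly k}) <-> (digit_sum p a <= n)%N)
  /\ (in_Sigma p (digit_sum p a) ('X^a : {poly k})
      /\ forall n : nat, in_Sigma p n ('X^a : {poly k}) -> (digit_sum p a <= n)%N).
Proof.
have p_gt1 := prime_gt1 hp.
have Sigma_iff n : in_Sigma p n ('X^a : {poly k}) <-> (digit_sum p a <= n)%N.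
  split; last exact: in_Sigma_Xn.
  by move/(Sigma_digit_bounded p_gt1)/(_ a); apply; rewrite coefXn eqxx oner_neq0.
split; first exact: Sigma_iff.
by split=> [|n /Sigma_iff //]; apply/Sigma_iff.
Qed.
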